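(* Let $M\cong\mathbb{Z}^k$ be a lattice with dual $N=\operatorname{Hom}(M,\mathbb{Z})$, let $\mathbb{T}=\operatorname{Spec}\mathbb{C}[M]$, and let $X=\operatorname{Spec}A$ be an affine $\mathbb{T}$-variety. Then there is a unique splitting of the acting torus $\mathbb{T}=\mathbb{T}_1\times\mathbb{T}_2$ (induced by a splitting of lattices $N=N_1\oplus N_2$) such that: (1) the action of $\mathbb{T}_1$ on $X$ is fix-pointed; (2) the torus $\mathbb{T}_2$ acts (not necessarily faithfully) on $X_H:=X/\!/\mathbb{T}_1$, and this action is hyperbolic; (3) the quotient morphism $\pi:X\to X/\!/\mathbb{T}$ factorizes as the composition $X\to X_H\to X_H/\!/\mathbb{T}_2\cong X/\!/\mathbb{T}$, where the first map is the quotient by $\mathbb{T}_1$ and the second is the quotient by $\mathbb{T}_2$.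
   Context: The base field is $\mathbb{C}$. A $\mathbb{T}$-variety is a normal variety with a faithful algebraic $\mathbb{T}$-action. For an affine variety $Y$ with an action of a torus $\mathbb{T}'$, the algebraic quotient is $Y/\!/\mathbb{T}'=\operatorname{Spec}(\mathbb{C}[Y]^{\mathbb{T}'})$. A $\mathbb{T}'$-action on an affine variety $Y=\operatorname{Spec}B$, with character lattice $M'$, corresponds to an $M'$-grading $B=\bigoplus_{u\in M'}B_u$, where $B_u=\{f\in B:\lambda\cdot f=\chi^u(\lambda)f\}$. The weight monoid is $\{u\in M': B_u\neq 0\}$ and the weight cone $\omega\subseteq M'_{\mathbb{Q}}=M'\otimes\mathbb{Q}$ is the cone it spans. The action is called fix-pointed if the only linear subspace contained in $\omega$ is $\{0\}$, and hyperbolic if $\omega=M'_{\mathbb{Q}}$. *)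

From HB Require Import structures.
From mathcomp Require Import all_boot all_order all_algebra.
From mathcomp Require Import reals complex.
Set Implicit Arguments. Unset Strict Implicit. Unset Printing Implicit Defensive.
Import Order.TTheory GRing.Theory Num.Theory.
Local Open Scope ring_scope.

(* Conventions.
   - Character lattice M = Z^k  is  'rV[int]_k (row vectors),
     cocharacter lattice N = Hom(M,Z) is 'cV[int]_k, pairing <u,n> = u *m n.
   - An affine T-variety X = Spec A, T = Spec C[M], is given by the C-algebra A
     together with the M-grading  part : M -> (A -> Prop),  part u = A_u.
   - Restricting/coarsening the grading along a lattice map M -> M', u |-> u *m F
     (F : 'M[int]_k) gives the grading of the induced action of the torus with
     character lattice M' = M *m F. *)

Section TVar.
Variables (C : fieldType) (A : comAlgType C) (k : nat).
Local Notation M := 'rV[int]_k.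
Local Notation MQ := 'rV[rat]_k.

Definition is_grading (part : M -> A -> Prop) : Prop :=
  [/\ (forall u, part u 0) /\
      (forall u (c : C) a b, part u a -> part u b -> part u (c *: a + b)),
      forall u v a b, part u a -> part v b -> part (u + v) (a * b),
      part 0 1,
      forall a : A, exists (s : seq M) (f : M -> A),
        [/\ uniq s, forall u, part u (f u) & a = \sum_(u <- s) f u]
    & forall (s : seq M) (f : M -> A), uniq s -> (forall u, part u (f u)) ->
        \sum_(u <- s) f u = 0 -> forall u, u \in s -> f u = 0].

Definition coarse (part : M -> A -> Prop) (F : 'M[int]_k) (w : M) : A -> Prop :=
  fun a => exists (s : seq M) (f : M -> A),
    [/\ forall u, part u (f u), forall u, u \in s -> u *m F = w
      & a = \sum_(u <- s) f u].

Definition weights (B : A -> Prop) (Q : M -> A -> Prop) (w : M) : Prop :=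
  exists a, [/\ B a, Q w a & a <> 0].

Definition ratrow (u : M) : MQ := map_mx (fun z : int => z%:~R) u.

Definition wcone (S : M -> Prop) : MQ -> Prop :=
  fun v => exists (s : seq M) (c : M -> rat),
    (forall u, u \in s -> S u /\ 0 <= c u) /\
    v = \sum_(u <- s) c u *: ratrow u.

Definition fix_pointed_cone (om : MQ -> Prop) : Prop :=
  forall V : MQ -> Prop,
    V 0 -> (forall x y, V x -> V y -> V (x + y)) ->
    (forall (c : rat) x, V x -> V (c *: x)) ->
    (forall x, V x -> om x) -> forall x, V x -> x = 0.

Definition hyperbolic_cone (F : 'M[int]_k) (om : MQ -> Prop) : Prop :=
  forall v, om v <-> exists x : MQ, v = x *m map_mx (fun z : int => z%:~R) F.

(* Faithfulness of the T-action on C-points: T(C) = Hom(M, C^x), t acts on A_u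
   by multiplication with t u; the action is faithful iff only the trivial
   character acts trivially. *)
Definition faithful_grading (part : M -> A -> Prop) : Prop :=
  forall t : M -> C, (forall u v, t (u + v) = t u * t v) -> (forall u, t u != 0) ->
    (forall u, weights (fun _ => True) part u -> t u = 1) -> forall u, t u = 1.

Definition is_domain : Prop := forall a b : A, a * b = 0 -> a = 0 \/ b = 0.

(* Normal: integrally closed in its field of fractions; a/b (b <> 0) root of a
   monic polynomial  x^n + sum_{i<n} c_i x^i  with c_i in A  implies b | a. *)
Definition is_normal : Prop :=
  forall (a b : A), b != 0 -> forall (n : nat) (c : nat -> A),
    a ^+ n + \sum_(i < n) c i * a ^+ i * b ^+ (n - i) = 0 ->
    exists x, a = x * b.

Definition fin_gen : Prop :=
  exists gens : seq A, forall S : A -> Prop,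
    S 1 -> (forall x y, S x -> S y -> S (x + y)) ->
    (forall x y, S x -> S y -> S (x * y)) -> (forall (c : C) x, S x -> S (c *: x)) ->
    (forall g, g \in gens -> S g) -> forall a, S a.

Definition affine_T_variety (part : M -> A -> Prop) : Prop :=
  [/\ fin_gen, is_domain, is_normal, is_grading part & faithful_grading part].

(* Splitting N = N1 (+) N2 encoded by an idempotent P acting on N = 'cV_k:
   N1 = image of P, N2 = kernel of P. Then Hom(N1,Z) ~= M *m P and
   Hom(N2,Z) ~= M *m (1 - P); the T1-weight of A_u is u *m P, the T2-weight
   is u *m (1 - P). *)
Definition lattice_splitting (P : 'M[int]_k) : Prop := P *m P = P.

Definition N1_of (P : 'M[int]_k) : 'cV[int]_k -> Prop :=
  fun n => exists m, n = P *m m.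

Definition splitting_props (part : M -> A -> Prop) (P : 'M[int]_k) : Prop :=
  let Q2 := 1%:M - P in
  let AT1 := coarse part P 0 in                         (* C[X_H] = A^{T1} *)
  let gradeH := fun w a => AT1 a /\ coarse part Q2 w a in
  [/\
      fix_pointed_cone (wcone (weights (fun _ => True) (coarse part P))),
      hyperbolic_cone Q2 (wcone (weights AT1 (coarse part Q2)))
    & (* (3) (A^{T1})^{T2} = A^T inside A, so X -> X_H -> X_H//T2 = X//T is pi *)
      forall a, gradeH 0 a <-> part 0 a].

End TVar.

From HB Require Import structures.
From mathcomp Require Import all_boot all_order all_algebra.
From mathcomp Require Import reals complex.
From mathcomp Require Import zify ring.
From Stdlib Require Import Classical.
Set Implicit Arguments. Unset Strict Implicit. Unset Printing Implicit Defensive.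
Import Order.TTheory GRing.Theory Num.Theory.
Local Open Scope ring_scope.

(* The splitting is read off from the weight cone w of the grading.  Its
   lineality space L = w /\ -w is a rational subspace, and by the Smith normal
   form there is an integral idempotent P whose kernel on M_Q is exactly L; P
   splits N into N1 = im P and N2 = ker P.  The T1-weight cone is w P, and a
   line in it would lift into L = ker P, so it contains none.  The weights of
   A^T1 are the weights lying in L, and since a generator occurring with
   positive coefficient in an element of L lies in L itself, they span
   L = M_Q (1 - P).  Conversely, (1) and (2) force ker P = L, which makes
   N1 = im P unique.  Property (3) is formal: a component of degree u that is
   invariant under both tori has u P = 0 = u (1 - P). *)

Local Notation ratmx := (map_mx (fun z : int => z%:~R : rat)).

Lemma sumr_count_mem (V : nmodType) (I : eqType) (t s : seq I) (F : I -> V) :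
  uniq t -> {subset s <= t} ->
  \sum_(i <- s) F i = \sum_(i <- t) F i *+ count_mem i s.
Proof.
move=> ut; elim: s => [|x s IH] st.
  by rewrite big_nil big1 // => i _; rewrite mulr0n.
rewrite big_cons IH => [|i si]; last by apply: st; rewrite in_cons si orbT.
rewrite (bigD1_seq x) ?st ?mem_head //= [in RHS](bigD1_seq x) ?st ?mem_head //=.
rewrite eqxx mulrS addrA [F x + _]addrC; congr (_ + _ + _).
by apply: eq_bigr => i /negPf; rewrite eq_sym => ->.
Qed.

Lemma sumr_neq0_exists (V : nmodType) (I : eqType) (s : seq I) (F : I -> V) :
  \sum_(i <- s) F i != 0 -> exists2 i, i \in s & F i != 0.
Proof.
move=> nz; have /hasP[i si Fi] : has (fun i => F i != 0) s; last by exists i.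
by apply: contraR nz => /hasPn F0; rewrite big1_seq // => i /andP[_ /F0 /negbNE/eqP].
Qed.

Section RowSpace.
Variables (F : fieldType) (n : nat) (L : 'rV[F]_n -> Prop).
Hypotheses (L0 : L 0) (LD : forall x y, L x -> L y -> L (x + y))
  (LZ : forall c x, L x -> L (c *: x)).

Lemma subspace_rowspace : exists B : 'M[F]_n, forall x, L x <-> (x <= B)%MS.
Proof.
suff grow m (B : 'M[F]_n) : (n - \rank B <= m)%N -> (forall y, (y <= B)%MS -> L y) ->
    exists B' : 'M[F]_n, forall x, L x <-> (x <= B')%MS.
  by apply: (grow n 0) => [|y]; rewrite ?leq_subr // submx0 => /eqP ->.
elim: m B => [|m IH] B corank BL.
  exists B => x; split=> [_|]; last exact: BL.
  by apply: submx_full; rewrite /row_full; have := rank_leq_col B; lia.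
have [LB|] := classic (forall x, L x -> (x <= B)%MS).
  by exists B => x; split; [exact: LB | exact: BL].
move=> /not_all_ex_not[x /(@imply_to_and (L x))[Lx /negP xB]].
apply: (IH (B + x)%MS).
  have /rank_ltmx : (B < B + x)%MS.
    by rewrite ltmxE addsmxSl; apply: contra xB; exact: submx_trans (addsmxSr B x).
  by have := rank_leq_col (B + x)%MS; lia.
move=> y /sub_addsmxP[[u v] /= ->]; apply: LD; first exact/BL/submxMl.
by rewrite [v]mx11_scalar mul_scalar_mx; exact: LZ.
Qed.

End RowSpace.

Lemma idempotent_kernel (F : fieldType) n (E : 'M[F]_n) (x : 'rV_n) :
  E *m E = E -> (x *m (1%:M - E) == 0) = (x <= E)%MS.
Proof.
move=> EE; rewrite mulmxBr mulmx1 subr_eq0.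
by apply/eqP/submxP => [xE|[y ->]]; [exists x | rewrite -mulmxA EE].
Qed.

Lemma diag_mx_support (F : fieldType) n (d : 'rV[F]_n) :
  (diag_mx d :=: diag_mx (\row_i (d 0 i != 0)%:R))%MS.
Proof.
apply/eqmxP/andP; split; apply/submxP.
  exists (diag_mx d); rewrite mulmx_diag; congr diag_mx; apply/rowP => i.
  by rewrite !mxE; case: eqP => [->|]; rewrite ?mulr0 ?mulr1.
exists (diag_mx (\row_i (d 0 i)^-1)); rewrite mulmx_diag; congr diag_mx.
apply/rowP => i; rewrite !mxE.
by have [->|nz] := eqVneq (d 0 i) 0; rewrite ?invr0 ?mul0r ?mulVf.
Qed.

Lemma int_scaled_mx m n (B : 'M[rat]_(m, n)) :
  exists2 D : rat, D != 0 & exists Bi : 'M[int]_(m, n), ratmx Bi = D *: B.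
Proof.
pose den p := denq (B p.1 p.2).
exists (\prod_(p : 'I_m * 'I_n) (den p)%:~R).
  by apply/prodf_neq0 => p _; rewrite intr_eq0 denq_neq0.
exists (\matrix_(i, j) (numq (B i j) * \prod_(p | p != (i, j)) den p)).
apply/matrixP => i j; rewrite !mxE intrM rmorph_prod [in RHS](bigD1 (i, j)) //=.
rewrite -[in RHS](divq_num_den (B i j)).
have d0 : (denq (B i j))%:~R != 0 :> rat by rewrite intr_eq0 denq_neq0.
by field.
Qed.

Lemma ratmx_row_full n (U : 'M[int]_n) : U \in unitmx -> row_full (ratmx U).
Proof.
move=> Uu; rewrite row_full_unit; have [] // := @mulmx1_unit _ _ (ratmx U) (ratmx (invmx U)).
by rewrite -map_mxM mulmxV // map_mx1.
Qed.

Lemma ratmx_eq0 m n (X : 'M[int]_(m, n)) : (ratmx X == 0) = (X == 0).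
Proof.
apply/eqP/eqP => [X0|->]; last by rewrite map_mx0.
by apply/matrixP => i j; move/matrixP/(_ i j): X0; rewrite !mxE => /eqP; rewrite intr_eq0 => /eqP.
Qed.

Lemma int_idempotent_rowspace n (B : 'M[int]_n) :
  exists2 E : 'M[int]_n, E *m E = E & (ratmx B :=: ratmx E)%MS.
Proof.
have [U Uu [R Ru [d _ defB]]] := int_Smith_normal_form B.
pose dd : 'rV[int]_n := \row_i d`_i.
pose e : 'rV[int]_n := \row_i (dd 0 i != 0)%:R.
have {defB} -> : B = U *m diag_mx dd *m R.
  by rewrite defB; congr (_ *m _ *m _); apply/matrixP => i j; rewrite !mxE.
have ee : diag_mx e *m diag_mx e = diag_mx e.
  rewrite mulmx_diag; congr diag_mx; apply/rowP => i; rewrite !mxE.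
  by case: (_ != 0); rewrite ?mulr0 ?mulr1.
exists (invmx R *m diag_mx e *m R).
  by rewrite -!mulmxA (mulmxA R) mulmxV // mul1mx (mulmxA (diag_mx e)) ee mulmxA.
have de : (ratmx (diag_mx dd) :=: ratmx (diag_mx e))%MS.
  have -> : ratmx (diag_mx e) = diag_mx (\row_i ((ratmx dd) 0 i != 0)%:R).
    by rewrite map_diag_mx; congr diag_mx; apply/rowP => i; rewrite !mxE intr_eq0 rmorph_nat.
  by rewrite map_diag_mx; exact: diag_mx_support.
rewrite !map_mxM -mulmxA; apply: eqmx_trans (eqmxMfull _ (ratmx_row_full Uu)) _.
apply: eqmx_trans (eqmxMr _ de) _.
set rE := (X in (_ :=: X)%MS).
have -> : ratmx (diag_mx e) *m ratmx R = ratmx R *m rE.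
  by rewrite /rE !mulmxA -[ratmx R *m _]map_mxM mulmxV // map_mx1 mul1mx.
exact: eqmxMfull (ratmx_row_full Ru).
Qed.

Lemma int_idempotent_kernel n (L : 'rV[rat]_n -> Prop) :
  L 0 -> (forall x y, L x -> L y -> L (x + y)) -> (forall c x, L x -> L (c *: x)) ->
  exists P : 'M[int]_n, P *m P = P /\ forall x, L x <-> x *m ratmx P = 0.
Proof.
move=> L0 LD LZ; have [B BL] := subspace_rowspace L0 LD LZ.
have [D D0 [Bi BiD]] := int_scaled_mx B.
have [E EE BiE] := int_idempotent_rowspace Bi.
exists (1%:M - E); split; first by rewrite mulmxBl mul1mx mulmxBr mulmx1 EE subrr subr0.
move=> x; rewrite BL -(eqmx_scale B D0) -BiD BiE -idempotent_kernel; last first.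
  by rewrite -map_mxM EE.
by rewrite map_mxB map_mx1; split=> /eqP.
Qed.

Lemma N1_of_sub k (P P' : 'M[int]_k) : P' *m P' = P' ->
  (forall x : 'rV_k, x *m ratmx P' = 0 -> x *m ratmx P = 0) ->
  forall n, N1_of P n -> N1_of P' n.
Proof.
move=> idP' ker n [m ->]; exists (P *m m).
have : (1%:M - P') *m P = 0.
  apply/eqP; rewrite -ratmx_eq0 map_mxM; apply/eqP/row_matrixP => i.
  rewrite row_mul row0; apply: ker.
  by rewrite -row_mul -map_mxM mulmxBl mul1mx idP' subrr map_mx0 row0.
by rewrite mulmxBl mul1mx => /eqP; rewrite subr_eq0 => /eqP {1}->; rewrite mulmxA.
Qed.

Section WeightCone.
Variable k : nat.
Local Notation M := 'rV[int]_k.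
Implicit Types (S : M -> Prop) (u : M) (x y v : 'rV[rat]_k) (F : 'M[int]_k).

Lemma wcone0 S : wcone S 0.
Proof. by exists [::], (fun=> 0); rewrite big_nil. Qed.

Lemma wcone_gen S u : S u -> wcone S (ratrow u).
Proof.
by move=> Su; exists [:: u], (fun=> 1); rewrite big_seq1 scale1r; split=> // w /[!inE] /eqP ->.
Qed.

Lemma wconeD S x y : wcone S x -> wcone S y -> wcone S (x + y).
Proof.
case=> s1 [c1 [h1 ->]] [s2 [c2 [h2 ->]]]; pose t := undup (s1 ++ s2).
have sub1 : {subset s1 <= t} by move=> u us; rewrite mem_undup mem_cat us.
have sub2 : {subset s2 <= t} by move=> u us; rewrite mem_undup mem_cat us orbT.
have count_ge0 (s : seq M) (c : M -> rat) (hs : forall u, u \in s -> S u /\ 0 <= c u) u :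
    0 <= c u *+ count_mem u s.
  case: (boolP (u \in s)) => [/hs[_ cu]|/count_memPn ->]; first exact: mulrn_wge0 _ cu.
  by rewrite mulr0n.
exists t, (fun u => c1 u *+ count_mem u s1 + c2 u *+ count_mem u s2); split.
  move=> u; rewrite mem_undup mem_cat => su; split; last by rewrite addr_ge0 ?count_ge0.
  by case/orP: su => [/h1|/h2] [].
rewrite (sumr_count_mem _ (undup_uniq _) sub1) (sumr_count_mem _ (undup_uniq _) sub2).
by rewrite -big_split; apply: eq_bigr => u _; rewrite scalerDl -!scalerMnl.
Qed.

Lemma wconeZ S c x : 0 <= c -> wcone S x -> wcone S (c *: x).
Proof.
move=> c0 [s [c' [hs ->]]]; exists s, (fun u => c * c' u); split.
  by move=> u /hs[Su cu]; rewrite mulr_ge0.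
by rewrite scaler_sumr; apply: eq_bigr => u _; rewrite scalerA.
Qed.

Lemma wcone_ind S (Q : 'rV[rat]_k -> Prop) :
  Q 0 -> (forall x y, Q x -> Q y -> Q (x + y)) ->
  (forall c u, S u -> 0 <= c -> Q (c *: ratrow u)) ->
  forall v, wcone S v -> Q v.
Proof.
move=> Q0 QD QZ v [s [c [hs ->]]]; rewrite big_seq; apply: big_ind => // u us.
by have [Su cu] := hs u us; exact: QZ.
Qed.

Lemma sub_wcone S S' : (forall u, S u -> S' u) -> forall v, wcone S v -> wcone S' v.
Proof.
move=> SS'; apply: wcone_ind => [|x y|c u Su c0]; [exact: wcone0 | exact: wconeD |].
by apply: wconeZ c0 _; apply/wcone_gen/SS'.
Qed.

Lemma eq_wcone S S' : (forall u, S u <-> S' u) -> forall v, wcone S v <-> wcone S' v.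
Proof. by move=> SS' v; split; apply: sub_wcone => u /SS'. Qed.

Definition mulmx_img S F (w : M) := exists2 u, S u & w = u *m F.

Lemma ratrowM u F : ratrow (u *m F) = ratrow u *m ratmx F.
Proof. exact: map_mxM. Qed.

Lemma wcone_mulmx S F v : wcone S v -> wcone (mulmx_img S F) (v *m ratmx F).
Proof.
move: v; apply: wcone_ind => [|x y hx hy|c u Su c0].
- by rewrite mul0mx; exact: wcone0.
- by rewrite mulmxDl; exact: wconeD.
by rewrite -scalemxAl -ratrowM; apply/(wconeZ c0)/wcone_gen; exists u.
Qed.

Lemma wcone_mulmx_inv S F v :
  wcone (mulmx_img S F) v -> exists2 y, wcone S y & v = y *m ratmx F.
Proof.
move: v; apply: wcone_ind => [|x y [x' hx' ->] [y' hy' ->]|c _ [u Su ->] c0].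
- by exists 0; [exact: wcone0 | rewrite mul0mx].
- by exists (x' + y'); [exact: wconeD | rewrite mulmxDl].
by exists (c *: ratrow u); [exact/(wconeZ c0)/wcone_gen | rewrite ratrowM scalemxAl].
Qed.

Lemma wcone_mulmx_eq0 S F v :
  (forall u, S u -> u *m F = 0) -> wcone S v -> v *m ratmx F = 0.
Proof.
move=> SF; move: v; apply: wcone_ind => [|x y hx hy|c u Su _].
- exact: mul0mx.
- by rewrite mulmxDl hx hy addr0.
by rewrite -scalemxAl -ratrowM SF // /ratrow map_mx0 scaler0.
Qed.

Definition lineality S x := wcone S x /\ wcone S (- x).

Lemma lineality0 S : lineality S 0.
Proof. by rewrite /lineality oppr0; split; exact: wcone0. Qed.

Lemma linealityD S x y : lineality S x -> lineality S y -> lineality S (x + y).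
Proof. by move=> [hx hnx] [hy hny]; split; rewrite ?opprD; exact: wconeD. Qed.

Lemma linealityZ S c x : lineality S x -> lineality S (c *: x).
Proof.
move=> [hx hnx]; have [c0|c_lt0] := lerP 0 c.
  by split; rewrite -?scalerN; exact: wconeZ.
have oppc_ge0 : 0 <= - c by rewrite oppr_ge0 ltW.
have -> : c *: x = (- c) *: (- x) by rewrite scaleNr scalerN opprK.
by split; rewrite -?scalerN ?opprK; exact: wconeZ.
Qed.

Lemma lineality_wcone S v :
  lineality S v -> wcone (fun u => S u /\ lineality S (ratrow u)) v.
Proof.
case=> -[s [c [hs ev]]] hnv; rewrite ev big_seq; apply: big_ind => [|x y|u us].
- exact: wcone0.
- exact: wconeD.
have [Su c0] := hs u us; have [->|cu] := eqVneq (c u) 0.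
  by rewrite scale0r; exact: wcone0.
apply/(wconeZ c0)/wcone_gen; split=> //; split; first exact: wcone_gen.
have -> : - ratrow u = (c u)^-1 *: (- v + \sum_(w <- rem u s) c w *: ratrow w).
  by rewrite ev (big_rem u us) /= opprD addrNK scalerN scalerA mulVf ?scale1r.
apply: wconeZ; first by rewrite invr_ge0.
apply: wconeD hnv _; exists (rem u s), c; split=> // w /mem_rem; exact: hs.
Qed.

End WeightCone.

Section Splitting.
Variables (k : nat) (S : 'rV[int]_k -> Prop) (P : 'M[int]_k).

Local Notation omega1 := (wcone (mulmx_img S P)).
Local Notation omega2 := (wcone (fun u => S u /\ u *m P = 0)).

Lemma mulmx_ratmx1B (x : 'rV[rat]_k) : x *m ratmx (1%:M - P) = x - x *m ratmx P.
Proof. by rewrite map_mxB map_mx1 mulmxBr mulmx1. Qed.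

Lemma fix_pointed_mulmx_img :
  (forall x, lineality S x <-> x *m ratmx P = 0) -> fix_pointed_cone omega1.
Proof.
move=> kerP V V0 VD VZ Vom x Vx; have [y hy ex] := wcone_mulmx_inv (Vom x Vx).
rewrite ex in Vx *.
have [y' hy' ey'] : exists2 y', wcone S y' & - (y *m ratmx P) = y' *m ratmx P.
  by apply/wcone_mulmx_inv/Vom; rewrite -scaleN1r; exact: VZ.
have Lyy' : lineality S (y + y') by apply/kerP; rewrite mulmxDl -ey' subrr.
apply/kerP; split=> //.
have -> : - y = y' - (y + y') by rewrite opprD addrCA subrr addr0.
exact: wconeD hy' Lyy'.2.
Qed.

Lemma hyperbolic_kernel : P *m P = P ->
  (forall x, lineality S x <-> x *m ratmx P = 0) -> hyperbolic_cone (1%:M - P) omega2.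
Proof.
move=> PP kerP v; split=> [om_v|[x ->]].
  by exists v; rewrite mulmx_ratmx1B (wcone_mulmx_eq0 _ om_v) ?subr0 // => u [].
have : lineality S (x *m ratmx (1%:M - P)).
  by apply/kerP; rewrite -mulmxA -map_mxM mulmxBl mul1mx PP subrr map_mx0 mulmx0.
move/lineality_wcone; apply: sub_wcone => u [Su /kerP]; rewrite -ratrowM => /eqP.
by rewrite /ratrow ratmx_eq0 => /eqP.
Qed.

Lemma lineality_kernel : fix_pointed_cone omega1 -> hyperbolic_cone (1%:M - P) omega2 ->
  forall x, lineality S x <-> x *m ratmx P = 0.
Proof.
move=> fixP hypP x; split=> [Lx|xP].
  pose V y := exists c : rat, y = c *: (x *m ratmx P).
  apply: (fixP V); last by exists 1; rewrite scale1r.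
  - by exists 0; rewrite scale0r.
  - by move=> _ _ [c1 ->] [c2 ->]; exists (c1 + c2); rewrite scalerDl.
  - by move=> c _ [c1 ->]; exists (c * c1); rewrite scalerA.
  by move=> _ [c ->]; rewrite scalemxAl; exact/wcone_mulmx/(linealityZ c Lx).1.
have kerP_wcone y : y *m ratmx P = 0 -> wcone S y.
  move=> yP; apply: sub_wcone (fun u => @proj1 _ _) _ _.
  by apply/hypP; exists y; rewrite mulmx_ratmx1B yP subr0.
by split; apply: kerP_wcone; rewrite // mulNmx xP oppr0.
Qed.

End Splitting.

Section Grading.
Variables (C : fieldType) (A : comAlgType C) (k : nat) (part : 'rV[int]_k -> A -> Prop).
Hypothesis grading : is_grading part.
Local Notation M := 'rV[int]_k.
Local Notation S := (weights (fun _ => True) part).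

Lemma part0 u : part u 0.
Proof. by case: grading => -[]. Qed.

Lemma partD u a b : part u a -> part u b -> part u (a + b).
Proof. by case: grading => -[_ lin] _ _ _ _ ha /(lin _ 1 _ _ ha); rewrite scale1r. Qed.

Lemma partN u a : part u a -> part u (- a).
Proof.
by case: grading => -[_ lin] _ _ _ _ /(lin _ (-1))/(_ (part0 u)); rewrite scaleN1r addr0.
Qed.

Lemma partMn u a n : part u a -> part u (a *+ n).
Proof.
by move=> ha; elim: n => [|n IH]; [rewrite mulr0n; exact: part0 | rewrite mulrS; exact: partD].
Qed.

Lemma part_sum_eq0 (s : seq M) (f : M -> A) : uniq s -> (forall u, part u (f u)) ->
  \sum_(u <- s) f u = 0 -> forall u, u \in s -> f u = 0.
Proof. by case: grading => _ _ _ _; apply. Qed.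

Lemma coarse_part F w u a : part u a -> u *m F = w -> coarse part F w a.
Proof.
move=> ha uF; exists [:: u], (fun v => if v == u then a else 0); split.
- by move=> v; case: eqP => [->|_]; [exact: ha | exact: part0].
- by move=> v /[!inE] /eqP ->.
by rewrite big_seq1 eqxx.
Qed.

(* The two decompositions of [a] have the same homogeneous components, by
   uniqueness of decompositions over the union of their supports. *)
Lemma coarse_joint F1 F2 w1 w2 a : coarse part F1 w1 a -> coarse part F2 w2 a ->
  exists s f, [/\ forall u, part u (f u),
    forall u, u \in s -> u *m F1 = w1 /\ u *m F2 = w2 & a = \sum_(u <- s) f u].
Proof.
case=> s1 [f1 [p1 e1 ->]] [s2 [f2 [p2 e2 ea]]]; pose t := undup (s1 ++ s2).
have sub1 : {subset s1 <= t} by move=> u us; rewrite mem_undup mem_cat us.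
have sub2 : {subset s2 <= t} by move=> u us; rewrite mem_undup mem_cat us orbT.
pose g u := f1 u *+ count_mem u s1 - f2 u *+ count_mem u s2.
have g0 : forall u, u \in t -> g u = 0.
  apply: part_sum_eq0; first exact: undup_uniq.
    by move=> u; apply: partD; [exact: partMn | apply/partN/partMn].
  rewrite sumrB -(sumr_count_mem _ (undup_uniq _) sub1).
  by rewrite -(sumr_count_mem _ (undup_uniq _) sub2) ea subrr.
exists [seq u <- t | (u \in s1) && (u \in s2)], (fun u => f1 u *+ count_mem u s1); split.
- by move=> u; exact: partMn.
- by move=> u; rewrite mem_filter => /andP[/andP[/e1 ? /e2 ?] _].
rewrite (sumr_count_mem _ (undup_uniq _) sub1) big_filter.
rewrite [LHS](bigID (fun u => (u \in s1) && (u \in s2))) /= [X in _ + X]big1_seq ?addr0 //.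
move=> u /andP[hn ut]; have [h1|/count_memPn ->] := boolP (u \in s1); last by rewrite mulr0n.
rewrite h1 /= in hn; have := g0 u ut.
by rewrite /g (count_memPn hn) mulr0n subr0.
Qed.

Lemma weights_coarse F w : weights (fun _ => True) (coarse part F) w <-> mulmx_img S F w.
Proof.
split=> [[_ [_ [s [f [pf ef ->]] /eqP]]]|[u [a [_ pa nz]] ->]].
  by case/sumr_neq0_exists=> u us /eqP fu; exists u; [exists (f u) | rewrite ef].
by exists a; split=> //; exact: coarse_part pa _.
Qed.

Lemma weights_coarse_invariant F w :
  weights (coarse part F 0) (coarse part (1%:M - F)) w <-> S w /\ w *m F = 0.
Proof.
split=> [[a [h1 h2 /eqP]]|[[a [_ pa nz]] wF]].
  have [s [f [pf ef ->]]] := coarse_joint h1 h2.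
  case/sumr_neq0_exists=> u us /eqP fu; have [uF uF'] := ef u us.
  rewrite mulmxBr mulmx1 uF subr0 in uF'; rewrite -uF'.
  by split=> //; exists (f u).
exists a; split=> //; apply: coarse_part pa _ => //.
by rewrite mulmxBr mulmx1 wF subr0.
Qed.

Lemma coarse_invariant F a :
  coarse part F 0 a /\ coarse part (1%:M - F) 0 a <-> part 0 a.
Proof.
split=> [[h1 h2]|ha]; last by split; apply: coarse_part ha _; rewrite mul0mx.
have [s [f [pf ef ->]]] := coarse_joint h1 h2.
rewrite big_seq; apply: big_ind => [|b c|u us]; [exact: part0 | exact: partD |].
have [uF uF'] := ef u us; rewrite mulmxBr mulmx1 uF subr0 in uF'.
by rewrite -uF'.
Qed.

Lemma splitting_propsE P : splitting_props part P <->
  fix_pointed_cone (wcone (mulmx_img S P)) /\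
  hyperbolic_cone (1%:M - P) (wcone (fun u => S u /\ u *m P = 0)).
Proof.
have e1 := eq_wcone (weights_coarse P); have e2 := eq_wcone (weights_coarse_invariant P).
split=> [[fixP hypP _]|[fixP hypP]].
  split=> [V V0 VD VZ Vom|v]; first by apply: fixP => // x /Vom /e1.
  by rewrite -e2; exact: hypP.
split=> [V V0 VD VZ Vom|v|a]; last exact: coarse_invariant.
  by apply: fixP => // x /Vom /e1.
by rewrite e2; exact: hypP.
Qed.

End Grading.

Theorem torus_splitting (C : fieldType) (A : comAlgType C) (k : nat)
    (part : 'rV[int]_k -> A -> Prop) :
  is_grading part ->
  (exists P : 'M[int]_k, lattice_splitting P /\ splitting_props part P) /\
  (forall P P' : 'M[int]_k,
      lattice_splitting P -> splitting_props part P ->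
      lattice_splitting P' -> splitting_props part P' ->
      forall n, N1_of P n <-> N1_of P' n).
Proof.
move=> grading; set S := weights (fun _ => True) part; split.
  have [P [PP kerP]] :=
    int_idempotent_kernel (lineality0 S) (@linealityD _ S) (@linealityZ _ S).
  exists P; split=> //; apply/(splitting_propsE grading); split.
    exact: fix_pointed_mulmx_img.
  exact: hyperbolic_kernel.
move=> P P' PP /(splitting_propsE grading)[fixP hypP].
move=> PP' /(splitting_propsE grading)[fixP' hypP'].
have kerP := lineality_kernel fixP hypP; have kerP' := lineality_kernel fixP' hypP'.
by move=> n; split; apply: N1_of_sub => // x; [move/kerP'/kerP | move/kerP/kerP'].
Qed.

Local Open Scope complex_scope.

Theorem mainTheorem2 (R : realType) (k : nat) (A : comAlgType R[i])
    (part : 'rV[int]_k -> A -> Prop) :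
  affine_T_variety part ->
  (exists P : 'M[int]_k, lattice_splitting P /\ splitting_props part P) /\
  (forall P P' : 'M[int]_k,
      lattice_splitting P -> splitting_props part P ->
      lattice_splitting P' -> splitting_props part P' ->
      forall n, N1_of P n <-> N1_of P' n).
Proof. by case=> _ _ _ grading _; exact: torus_splitting. Qed.
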